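(* Let $X$ be an infinite-dimensional real Banach space and let $A \subset X$ be a convex subset with $0 \in A$. Assume there is a finite subset $O \subset X$ such that $B_X \subset A + O$. Then for every $\varepsilon > 0$ there exist a finite-codimensional subspace $Y \subset X$ and a finite subset $H \subset A$ such that $$B_Y \subset (A - H) + \varepsilon B_X.$$
   Context: $B_X$ is the closed unit ball of $X$ and $B_Y = B_X \cap Y$. Sums and differences of sets are Minkowski sums: $A + O = \{a+o : a\in A, o \in O\}$, $A - H = \{a - h : a \in A, h \in H\}$. *)

From HB Require Import structures.
From mathcomp Require Import all_boot all_order all_algebra.
From mathcomp Require Import all_classical all_reals all_analysis.
Set Implicit Arguments. Unset Strict Implicit. Unset Printing Implicit Defensive.
Import Order.TTheory GRing.Theory Num.Theory.
Import numFieldNormedType.Exports.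
Local Open Scope classical_set_scope.
Local Open Scope ring_scope.

Section Defs.
Variables (R : realType) (X : normedModType R).

Definition unit_ball : set X := [set x | `|x| <= 1].

Definition minkowski_sum (A O : set X) : set X := [set a + o | a in A & o in O].
Definition minkowski_diff (A H : set X) : set X := [set a - h | a in A & h in H].

Definition set_scale (e : R) (B : set X) : set X := [set e *: b | b in B].

Definition linear_subspace (Y : set X) : Prop :=
  Y 0 /\ (forall x y, Y x -> Y y -> Y (x + y)) /\
  (forall (c : R) x, Y x -> Y (c *: x)).

Definition finite_codim (Y : set X) : Prop :=
  exists (n : nat) (v : 'I_n -> X),
    forall x, exists (y : X) (c : 'I_n -> R), Y y /\ x = y + \sum_(i < n) c i *: v i.

Definition infinite_dimensional : Prop :=
  forall (n : nat) (v : 'I_n -> X),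
    exists x : X, forall c : 'I_n -> R, x <> \sum_(i < n) c i *: v i.

End Defs.

Arguments unit_ball {R} X.

(* For each of the finitely many o in O there are two cases.  If some h in A
   has |o + h| <= eps, then every y with y - o in A is
   (y - o - h) + (o + h), a point of (A - H) + eps B_X once h is in H.
   Otherwise -o is at distance > eps from the convex set A, and Hahn-Banach,
   applied to the Minkowski gauge of the open eps-neighbourhood of A, gives a
   continuous linear functional f with f < f(-o) on A; then no y in ker f has
   y - o in A.  Y is the intersection of these finitely many kernels. *)

From HB Require Import structures.
From mathcomp Require Import all_boot all_order all_algebra.
From mathcomp Require Import all_classical all_reals all_analysis.
From mathcomp Require Import ring lra.
Set Implicit Arguments. Unset Strict Implicit. Unset Printing Implicit Defensive.
Import Order.TTheory GRing.Theory Num.Theory.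
Import numFieldNormedType.Exports.
Local Open Scope classical_set_scope.
Local Open Scope ring_scope.

Lemma convex_setE (R : realType) (X : lmodType R) (A : set (convex_lmodType X)) :
  convex_set A <-> forall a b (l : R), A a -> A b -> 0 <= l -> l <= 1 ->
    A (l *: a + (1 - l) *: b).
Proof.
split => [A_conv a b l Aa Ab l_ge0 l_le1 | A_comb a b l].
  by have /set_mem := A_conv a b (Itv01 l_ge0 l_le1) (mem_set Aa) (mem_set Ab).
by rewrite !inE => Aa Ab; apply: A_comb; rewrite ?ge0 ?le1.
Qed.

Section HahnBanach.
Variables (R : realType) (X : lmodType R) (p : X -> R).
Hypotheses (p_add : forall x y, p (x + y) <= p x + p y)
  (p_scale : forall (t : R) x, 0 < t -> p (t *: x) <= t * p x).

Lemma sublinearZ t x : 0 < t -> p (t *: x) = t * p x.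
Proof.
move=> t_gt0; apply/eqP; rewrite eq_le p_scale //=.
have := @p_scale t^-1 (t *: x); rewrite invr_gt0 => /(_ t_gt0).
by rewrite scalerA mulVf ?gt_eqF // scale1r ler_pdivlMl.
Qed.

(* A partial linear functional below [p] is encoded by its graph: a linear
   subspace of [X * R] that is the graph of a function ([graph_fun0]). *)
Record dominated_graph (G : set (X * R)) : Prop := DominatedGraph {
  graph0 : G (0, 0);
  graphD : forall x r y s, G (x, r) -> G (y, s) -> G (x + y, r + s);
  graphZ : forall k x r, G (x, r) -> G (k *: x, k * r);
  graph_fun0 : forall r, G (0, r) -> r = 0;
  graph_le : forall x r, G (x, r) -> r <= p x }.

Lemma dominated_graph_fun G x r s : dominated_graph G -> G (x, r) -> G (x, s) -> r = s.
Proof.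
move=> dG Gxr Gxs; apply/eqP; rewrite -subr_eq0; apply/eqP.
apply: (graph_fun0 dG); rewrite -(subrr x) -mulN1r -scaleN1r.
by apply: (graphD dG Gxr); exact: graphZ.
Qed.

Section OneStepExtension.
Variables (G : set (X * R)) (z : X).
Hypotheses (dG : dominated_graph G) (z_notin : ~ exists r, G (z, r)).

Lemma extension_slope : exists c,
  (forall x r, G (x, r) -> r - p (x - z) <= c) /\
  (forall y s, G (y, s) -> c <= p (y + z) - s).
Proof.
(* Sublinearity of [p] is what leaves room for a slope [c] between the two
   families of bounds. *)
have sep x r y s : G (x, r) -> G (y, s) -> r - p (x - z) <= p (y + z) - s.
  move=> Gxr Gys; have := graph_le dG (graphD dG Gxr Gys).
  have := p_add (x - z) (y + z); rewrite addrACA addNr addr0; lra.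
pose S := [set u | exists x r, G (x, r) /\ u = r - p (x - z)].
have S_ub y s : G (y, s) -> ubound S (p (y + z) - s).
  by move=> Gys _ [x [r [Gxr ->]]]; exact: sep.
have S_n0 : S !=set0 by exists (0 - p (0 - z)), 0, 0; split => //; exact: graph0.
exists (sup S); split.
  move=> x r Gxr; apply: ub_le_sup; last by exists x, r.
  by exists (p (0 + z) - 0); apply: S_ub (graph0 dG).
by move=> y s Gys; apply: ge_sup => //; exact: S_ub.
Qed.

Definition graph_extend (c : R) : set (X * R) :=
  [set u | exists x r t, G (x, r) /\ u = (x + t *: z, r + t * c)].

Lemma graph_extend_le c :
  (forall x r, G (x, r) -> r - p (x - z) <= c) ->
  (forall y s, G (y, s) -> c <= p (y + z) - s) ->
  forall x r t, G (x, r) -> r + t * c <= p (x + t *: z).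
Proof.
move=> c_ge c_le x r t Gxr.
have [t_lt0|t_gt0|->] := ltgtP t 0; last first.
- by rewrite scale0r mul0r !addr0; exact: (graph_le dG Gxr).
- have := c_le _ _ (graphZ dG t^-1 Gxr).
  have -> : t^-1 *: x + z = t^-1 *: (x + t *: z).
    by rewrite scalerDr scalerA mulVf ?gt_eqF // scale1r.
  rewrite sublinearZ ?invr_gt0 // -mulrBr ler_pdivlMl //; lra.
have {t_lt0} [s s_gt0 ->] : exists2 s, 0 < s & t = - s.
  by exists (- t); rewrite ?opprK ?oppr_gt0.
have := c_ge _ _ (graphZ dG s^-1 Gxr).
have -> : s^-1 *: x - z = s^-1 *: (x + - s *: z).
  by rewrite scalerDr scalerA mulrN mulVf ?gt_eqF // scaleN1r.
rewrite sublinearZ ?invr_gt0 // -mulrBr ler_pdivrMl // mulNr; lra.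
Qed.

Lemma dominated_graph_extend : exists G', dominated_graph G' /\ G `<` G'.
Proof.
have [c [c_ge c_le]] := extension_slope.
exists (graph_extend c); split; last first.
  split; first by move=> [x r] Gxr; exists x, r, 0; rewrite scale0r mul0r !addr0.
  by move=> /(_ (z, c)) extG; apply: z_notin; exists c; apply: extG; exists 0, 0, 1;
    rewrite scale1r mul1r !add0r; split => //; exact: graph0.
split.
- by exists 0, 0, 0; rewrite scale0r mul0r !addr0; split => //; exact: graph0.
- move=> _ _ _ _ [x1 [r1 [t1 [G1 [-> ->]]]]] [x2 [r2 [t2 [G2 [-> ->]]]]].
  exists (x1 + x2), (r1 + r2), (t1 + t2); split; first exact: graphD.
  by congr (_, _); rewrite ?scalerDl ?mulrDl addrACA.
- move=> k _ _ [x [r [t [Gxr [-> ->]]]]].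
  exists (k *: x), (k * r), (k * t); split; first exact: graphZ.
  by congr (_, _); rewrite ?scalerDr ?mulrDr ?scalerA ?mulrA.
- move=> r0 [x [r [t [Gxr []]]]].
  have [-> | t_neq0] := eqVneq t 0.
    rewrite scale0r mul0r !addr0 => x0 ->; apply: (graph_fun0 dG).
    by rewrite x0.
  move=> /eqP; rewrite eq_sym addr_eq0 => /eqP x_eq _; exfalso; apply: z_notin.
  exists (- t^-1 * r); have -> : z = - t^-1 *: x.
    by rewrite x_eq scalerN scaleNr opprK scalerA mulVf // scale1r.
  exact: graphZ.
- by move=> _ _ [x [r [t [Gxr [-> ->]]]]]; exact: graph_extend_le.
Qed.

End OneStepExtension.

Lemma dominated_graph_bigcup (F : set (set (X * R))) :
  F !=set0 -> F `<=` dominated_graph -> total_on F subset ->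
  dominated_graph (\bigcup_(G in F) G).
Proof.
move=> [G0 FG0] Fdom Ftot.
have common a b : (\bigcup_(G in F) G) a -> (\bigcup_(G in F) G) b ->
    exists2 G, F G & G a /\ G b.
  move=> [G FG Ga] [G' FG' G'b]; have [GG'|G'G] := Ftot _ _ FG FG'.
    by exists G' => //; split => //; apply: GG'.
  by exists G => //; split => //; apply: G'G.
split.
- by exists G0 => //; exact: (graph0 (Fdom _ FG0)).
- move=> x r y s Ua Ub; have [G FG [Ga Gb]] := common _ _ Ua Ub.
  by exists G => //; exact: (graphD (Fdom _ FG) Ga Gb).
- by move=> k x r [G FG Ga]; exists G => //; exact: (graphZ (Fdom _ FG) k Ga).
- by move=> r [G FG Ga]; exact: (graph_fun0 (Fdom _ FG) Ga).
- by move=> x r [G FG Ga]; exact: (graph_le (Fdom _ FG) Ga).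
Qed.

Lemma dominated_graph_total G0 : dominated_graph G0 ->
  exists2 M, dominated_graph M & G0 `<=` M /\ forall x, exists r, M (x, r).
Proof.
move=> dG0.
pose P G := G = set0 \/ dominated_graph G /\ G0 `<=` G.
have P_chain F : F `<=` P -> total_on F subset -> P (\bigcup_(G in F) G).
  move=> FP Ftot.
  have [[G1 [FG1 [a G1a]]]|F_empty] := pselect (exists G, F G /\ G !=set0); last first.
    left; apply/seteqP; split=> // a [G FG Ga].
    by apply: F_empty; exists G; split => //; exists a.
  pose F' := [set G | F G /\ G !=set0].
  have F'P G : F' G -> dominated_graph G /\ G0 `<=` G.
    by move=> [/FP [->|//] [b []]].
  have -> : \bigcup_(G in F) G = \bigcup_(G in F') G.
    apply/seteqP; split => b [G FG Gb]; exists G => //; last by case: FG.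
    by split => //; exists b.
  have F'G1 : F' G1 by split => //; exists a.
  right; split; last by move=> b G0b; exists G1 => //; apply: (F'P _ F'G1).2.
  apply: dominated_graph_bigcup; first by exists G1.
    by move=> G /F'P [].
  by move=> G G' [FG _] [FG' _]; exact: Ftot.
have [M [[M0|[dM G0M]] Mmax]] := Zorn_bigcup P_chain.
  exfalso; apply: (Mmax G0); last by rewrite /P; right; split.
  by rewrite M0; split => // /(_ (0, 0) (graph0 dG0)).
exists M => //; split => // x; apply: contrapT => xM.
have [G' [dG' MG']] := dominated_graph_extend dM xM.
apply: (Mmax G' MG'); rewrite /P; right; split => //.
exact: subset_trans G0M (properW MG').
Qed.

Lemma total_graph_linear M : dominated_graph M -> (forall x, exists r, M (x, r)) ->
  exists f : {linear X -> R^o}, forall x, M (x, f x).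
Proof.
move=> dM /choice [f Mf].
have f_lin : linear (f : X -> R^o).
  move=> k x y; apply: (dominated_graph_fun dM (Mf _)).
  exact: (graphD dM (graphZ dM k (Mf x)) (Mf y)).
by exists (HB.pack_for {linear X -> R^o} (f : X -> R^o)
  (GRing.isLinear.Build R X R^o _ f f_lin)).
Qed.

Theorem hahn_banach G0 : dominated_graph G0 ->
  exists f : {linear X -> R^o},
    (forall x, f x <= p x) /\ forall x r, G0 (x, r) -> f x = r.
Proof.
move=> dG0; have [M dM [G0M Mtot]] := dominated_graph_total dG0.
have [f Mf] := total_graph_linear dM Mtot.
exists f; split; first by move=> x; exact: (graph_le dM (Mf x)).
by move=> x r G0xr; exact: (dominated_graph_fun dM (Mf x) (G0M _ G0xr)).
Qed.

Lemma hahn_banach_point x0 : (forall x, 0 <= p x) -> 1 <= p x0 ->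
  exists f : {linear X -> R^o}, (forall x, f x <= p x) /\ f x0 = 1.
Proof.
move=> p_ge0 px0_ge1.
have [|f [f_le f_ext]] := @hahn_banach [set (t *: x0, t) | t in setT].
  split.
  - by exists 0 => //; rewrite scale0r.
  - move=> _ _ _ _ [t1 _ [<- <-]] [t2 _ [<- <-]].
    by exists (t1 + t2) => //; rewrite scalerDl.
  - by move=> k _ _ [t _ [<- <-]]; exists (k * t) => //; rewrite scalerA.
  - move=> _ [t _ [/eqP + <-]]; rewrite scaler_eq0 => /orP[/eqP //|/eqP x0_eq0].
    have := sublinearZ 0 (ltr0n _ 2); rewrite scaler0.
    by move: px0_ge1; rewrite x0_eq0; lra.
  - move=> _ _ [t _ [<- <-]]; have [t_gt0|t_le0] := ltP 0 t.
      by rewrite sublinearZ // -{1}[t]mulr1 ler_pM2l.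
    exact: le_trans t_le0 (p_ge0 _).
by exists f; split => //; apply: f_ext; exists 1 => //; rewrite scale1r.
Qed.

End HahnBanach.

Section Gauge.
Variables (R : realType) (X : normedModType R) (C : set X) (r : R).
Hypotheses (C_conv : convex_set (C : set (convex_lmodType X)))
  (r_gt0 : 0 < r) (C_ball : forall x, `|x| < r -> C x).

Let C_comb := (convex_setE C).1 C_conv.

Definition gauge_set x := [set t : R | 0 < t /\ C (t^-1 *: x)].
Definition gauge x := inf (gauge_set x).

Lemma gauge_setW x t : 0 < t -> `|x| < r * t -> gauge_set x t.
Proof.
move=> t_gt0 xt; split => //; apply: C_ball.
by rewrite normrZ gtr0_norm ?invr_gt0 // ltr_pdivrMl // mulrC.
Qed.

Lemma gauge_set_n0 x : gauge_set x !=set0.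
Proof.
have xr_gt0 : 0 < (`|x| + 1) / r by rewrite divr_gt0 // ltr_pwDr.
by exists ((`|x| + 1) / r); apply: gauge_setW; rewrite // mulrC divfK ?gt_eqF ?ltrDl.
Qed.

Lemma gauge_set_lbound x : has_lbound (gauge_set x).
Proof. by exists 0 => t [t_gt0 _]; exact: ltW. Qed.

Lemma gauge_ge0 x : 0 <= gauge x.
Proof. by apply: lb_le_inf (gauge_set_n0 x) _ => t [t_gt0 _]; exact: ltW. Qed.

Lemma gauge_le x t : gauge_set x t -> gauge x <= t.
Proof. exact: ge_inf (gauge_set_lbound x) t. Qed.

Lemma gauge_le_norm x : gauge x <= `|x| / r.
Proof.
apply/ler_addgt0Pr => e e_gt0; apply: gauge_le; apply: gauge_setW.
  by rewrite ltr_pwDr // divr_ge0 // ltW.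
by rewrite mulrDr [r * (_ / _)]mulrC divfK ?gt_eqF // ltr_pwDr // mulr_gt0.
Qed.

Lemma gauge_add x y : gauge (x + y) <= gauge x + gauge y.
Proof.
apply/ler_addgt0Pr => e e_gt0.
have e2_gt0 : 0 < e / 2 by rewrite divr_gt0.
have [s [s_gt0 Cx] gxs] := inf_adherent e2_gt0 (conj (gauge_set_n0 x) (gauge_set_lbound x)).
have [t [t_gt0 Cy] gyt] := inf_adherent e2_gt0 (conj (gauge_set_n0 y) (gauge_set_lbound y)).
suff : gauge (x + y) <= s + t by rewrite /gauge; lra.
have st_gt0 : 0 < s + t by rewrite addr_gt0.
apply: gauge_le; split => //.
have l_ge0 : 0 <= s / (s + t) by rewrite divr_ge0 ?ltW.
have l_le1 : s / (s + t) <= 1 by rewrite ler_pdivrMr // mul1r lerDl ltW.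
have := C_comb Cx Cy l_ge0 l_le1.
have -> // : s / (s + t) *: (s^-1 *: x) + (1 - s / (s + t)) *: (t^-1 *: y) =
    (s + t)^-1 *: (x + y).
rewrite !scalerA scalerDr; congr (_ *: _ + _ *: _).
  by rewrite mulrAC mulfV ?gt_eqF // mul1r.
by field; rewrite !gt_eqF.
Qed.

Lemma gauge_scale (l : R) x : 0 < l -> gauge (l *: x) <= l * gauge x.
Proof.
move=> l_gt0; apply/ler_addgt0Pr => e e_gt0.
have el_gt0 : 0 < e / l by rewrite divr_gt0.
have [s [s_gt0 Cx] gxs] := inf_adherent el_gt0 (conj (gauge_set_n0 x) (gauge_set_lbound x)).
suff : gauge (l *: x) <= l * s.
  have : l * s < l * (gauge x + e / l) by rewrite ltr_pM2l.
  rewrite mulrDr [l * (e / l)]mulrC divfK ?gt_eqF //; lra.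
apply: gauge_le; split; first exact: mulr_gt0.
by rewrite scalerA invfM mulrAC mulVf ?gt_eqF // mul1r.
Qed.

Lemma gauge_ge1 x : ~ C x -> 1 <= gauge x.
Proof.
move=> Cx; rewrite leNgt; apply/negP => /(inf_lt (gauge_set_n0 x)) [t [t_gt0 Ctx] t_lt1].
have C0 : C 0 by apply: C_ball; rewrite normr0.
apply: Cx; have := C_comb Ctx C0 (ltW t_gt0) (ltW t_lt1).
by rewrite scaler0 addr0 scalerA mulfV ?gt_eqF // scale1r.
Qed.

Lemma gauge_lt1 x : open C -> C x -> gauge x < 1.
Proof.
rewrite openE => C_open Cx; have /nbhs_ballP [e e_gt0 xeC] := C_open x Cx.
have n_gt0 : 0 < `|x| + 1 by rewrite ltr_pwDr.
pose u := 1 + e / (`|x| + 1).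
have u_gt1 : 1 < u by rewrite ltrDl divr_gt0.
have u_gt0 : 0 < u := lt_trans ltr01 u_gt1.
apply: (@le_lt_trans _ _ u^-1); last by rewrite invf_lt1.
apply: gauge_le; split; first by rewrite invr_gt0.
rewrite invrK; apply: xeC; rewrite -ball_normE /= -{1}[x]scale1r -scalerBl normrZ.
rewrite distrC gtr0_norm ?subr_gt0 // /u [1 + _]addrC addrK.
by rewrite mulrAC ltr_pdivrMr // ltr_pM2l // ltrDl.
Qed.

End Gauge.

Section Thickening.
Variables (R : realType) (X : normedModType R) (A : set X) (e : R).

Definition thickening := [set z | exists2 a, A a & `|z - a| < e].

Lemma open_thickening : open thickening.
Proof.
have -> : thickening = \bigcup_(a in A) ball a e.
  by apply/seteqP; split => z [a Aa za]; exists a => //;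
    move: za; rewrite -ball_normE /= distrC.
by apply: bigcup_open => a _; exact: ball_open.
Qed.

Lemma thickening_ball : A 0 -> forall x, `|x| < e -> thickening x.
Proof. by move=> A0 x xe; exists 0 => //; rewrite subr0. Qed.

Lemma thickening_convex : convex_set (A : set (convex_lmodType X)) ->
  convex_set (thickening : set (convex_lmodType X)).
Proof.
move=> /convex_setE A_comb; apply/convex_setE => u v l [a Aa ua] [b Ab vb] l_ge0 l_le1.
exists (l *: a + (1 - l) *: b); first exact: A_comb.
have -> : l *: u + (1 - l) *: v - (l *: a + (1 - l) *: b) =
    l *: (u - a) + (1 - l) *: (v - b) by rewrite !scalerBr opprD addrACA.
apply: le_lt_trans (ler_normD _ _) _; rewrite !normrZ !ger0_norm ?subr_ge0 //.
have [->|l_neq0] := eqVneq l 0; first by rewrite mul0r add0r subr0 mul1r.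
have l_gt0 : 0 < l by rewrite lt_neqAle eq_sym l_neq0.
have : l * `|u - a| < l * e by rewrite ltr_pM2l.
have : (1 - l) * `|v - b| <= (1 - l) * e by rewrite ler_wpM2l ?subr_ge0 // ltW.
lra.
Qed.

End Thickening.

Lemma linear_le_norm_continuous (R : realType) (X : normedModType R)
    (f : {linear X -> R^o}) (M : R) :
  (forall x, f x <= M * `|x|) -> continuous f.
Proof.
move=> f_le; apply: bounded_linear_continuous; apply/linear_boundedP.
have f_norm x : `|f x| <= M * `|x|.
  rewrite ler_norml f_le andbT lerNl -linearN -(normrN x); exact: f_le.
near=> k => x; apply: le_trans (f_norm x) _; apply: ler_wpM2r => //.
Unshelve. all: by end_near.
Qed.

Lemma convex_separation (R : realType) (X : normedModType R) (A : set X) (e : R) (x1 : X) :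
  convex_set (A : set (convex_lmodType X)) -> A 0 -> 0 < e ->
  (forall a, A a -> e < `|x1 - a|) ->
  exists f : {linear X -> R^o}, continuous f /\ forall a, A a -> f a < f x1.
Proof.
move=> A_conv A0 e_gt0 x1_far.
have C_conv := thickening_convex (e := e) A_conv.
have C_ball := thickening_ball (e := e) A0.
have x1_notin : ~ thickening A e x1.
  by move=> [a Aa]; rewrite ltNge (ltW (x1_far _ Aa)).
have [f [f_le f_x1]] := hahn_banach_point (gauge_add C_conv e_gt0 C_ball)
  (gauge_scale e_gt0 C_ball) (gauge_ge0 e_gt0 C_ball)
  (gauge_ge1 C_conv e_gt0 C_ball x1_notin).
exists f; split.
  apply: (@linear_le_norm_continuous _ _ _ e^-1) => x.
  by rewrite mulrC; apply: le_trans (f_le x) (gauge_le_norm e_gt0 C_ball x).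
move=> a Aa; rewrite f_x1; apply: le_lt_trans (f_le a) _.
by apply: gauge_lt1 (open_thickening A e) _; exists a; rewrite ?subrr ?normr0.
Qed.

Section KernelSubspaces.
Variables (R : realType) (X : normedModType R) (f : {linear X -> R^o}).

Lemma closed_ker : continuous f -> closed [set x | f x = 0].
Proof. by move=> /continuous_closedP /(_ _ (closed_eq (y := 0))). Qed.

Variables (Y : set X).
Hypothesis Y_sub : linear_subspace Y.

Lemma linear_subspace_kerI : linear_subspace (Y `&` [set x | f x = 0]).
Proof.
have [Y0 [YD YZ]] := Y_sub; split; first by split => //=; rewrite linear0.
split.
  by move=> x y [Yx /= fx] [Yy /= fy]; split; [exact: YD | rewrite /= linearD fx fy addr0].
move=> k x [Yx /= fx]; split; first exact: YZ.
by rewrite /= linearZ_LR fx scaler0.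
Qed.

Lemma finite_codim_kerI : finite_codim Y -> finite_codim (Y `&` [set x | f x = 0]).
Proof.
have [Y0 [YD YZ]] := Y_sub; move=> [n [v Yv]].
have [[y0 [Yy0 fy0]]|f_Y0] := pselect (exists y0, Y y0 /\ f y0 != 0); last first.
  exists n, v => x; have [y [c [Yy ->]]] := Yv x; exists y, c; do 2 split => //.
  by apply/eqP/negPn/negP => fy; apply: f_Y0; exists y.
pose y1 := (f y0)^-1 *: y0.
have Yy1 : Y y1 by exact: YZ.
have fy1 : f y1 = 1 by rewrite linearZ_LR; exact: mulVf.
exists n.+1, (fun i => if unlift ord0 i is Some j then v j else y1); move=> x.
have [y [c [Yy ->]]] := Yv x.
exists (y - f y *: y1), (fun i => if unlift ord0 i is Some j then c j else f y); split.
  split; first by rewrite -scaleNr; apply: YD => //; exact: YZ.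
  by rewrite /= linearB linearZ_LR fy1 [_ *: _]mulr1 subrr.
rewrite big_ord_recl /= unlift_none addrA subrK; congr (_ + _).
by apply: eq_bigr => i _; rewrite liftK.
Qed.

End KernelSubspaces.

Section TranslateApproximation.
Variables (R : realType) (X : normedModType R) (A : set X) (eps : R).
Hypotheses (A_conv : convex_set (A : set (convex_lmodType X))) (A0 : A 0)
  (eps_gt0 : 0 < eps).

Let approx H := minkowski_sum (minkowski_diff A H) (set_scale eps (unit_ball X)).

Lemma approx_subset H H' : H `<=` H' -> approx H `<=` approx H'.
Proof.
move=> HH' _ [_ [a Aa [h Hh <-]] [w Bw <-]].
by exists (a - h); [exists a => //; exists h => //; exact: HH' | exists w].
Qed.

Lemma approx_near H h o y : H h -> `|o + h| <= eps -> A (y - o) -> approx H y.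
Proof.
move=> Hh oh Ayo; exists (y - o - h); first by exists (y - o) => //; exists h.
exists (o + h); last by rewrite (addrC o h) addrA !subrK.
exists (eps^-1 *: (o + h)); last by rewrite scalerA mulfV ?gt_eqF // scale1r.
by rewrite /unit_ball /= normrZ gtr0_norm ?invr_gt0 // ler_pdivrMl // mulr1.
Qed.

Lemma near_or_separated o :
  (exists h, A h /\ `|o + h| <= eps) \/
  exists f : {linear X -> R^o}, continuous f /\ forall y, f y = 0 -> ~ A (y - o).
Proof.
have [near|far] := pselect (exists h, A h /\ `|o + h| <= eps); [by left | right].
have o_far a : A a -> eps < `|- o - a|.
  move=> Aa; rewrite ltNge; apply/negP => oa; apply: far; exists a.
  by rewrite -normrN opprD !opprK in oa.
have [f [f_cont f_sep]] := convex_separation A_conv A0 eps_gt0 o_far.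
exists f; split => // y fy /f_sep.
by rewrite linearB linearN /= fy sub0r ltxx.
Qed.

Lemma approx_translates (s : seq X) : exists Y H,
  linear_subspace Y /\ closed Y /\ finite_codim Y /\ finite_set H /\ H `<=` A /\
  forall o y, o \in s -> Y y -> A (y - o) -> approx H y.
Proof.
elim: s => [|o s [Y [H [Y_sub [Y_closed [Y_codim [H_fin [HA approxY]]]]]]]].
  exists setT, set0; split; first by do ?split.
  split; first exact: closedT.
  split; first by exists 0%N, (fun _ => 0) => x; exists x, (fun _ => 0); rewrite big_ord0 addr0.
  by split; [exact: finite_set0 | split; [exact: sub0set | move=> o y]].
have [[h [Ah oh]]|[f [f_cont f_sep]]] := near_or_separated o.
  exists Y, (H `|` [set h]); do 3 split => //.
  split; first by rewrite finite_setU; split => //; exact: finite_set1.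
  split; first by move=> _ [/HA //|->].
  move=> o' y; rewrite in_cons => /orP[/eqP -> _|o's Yy Ayo'].
    by apply: approx_near oh; right.
  exact: approx_subset (@subsetUl _ H [set h]) _ (approxY _ _ o's Yy Ayo').
exists (Y `&` [set x | f x = 0]), H; split; first exact: linear_subspace_kerI.
split; first exact: closedI Y_closed (closed_ker f_cont).
split; first exact: finite_codim_kerI.
do 2 split => //; move=> o' y; rewrite in_cons => /orP[/eqP -> [_ /f_sep] //|o's [Yy _]].
exact: approxY.
Qed.

End TranslateApproximation.

Theorem theorem4p2 (R : realType) (X : completeNormedModType R)
    (A : set X) (O : set X) :
  infinite_dimensional X ->
  convex_set (A : set (convex_lmodType X)) ->
  A 0 ->
  finite_set O ->
  unit_ball X `<=` minkowski_sum A O ->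
  forall eps : R, 0 < eps ->
    exists (Y : set X) (H : set X),
      linear_subspace Y /\ closed Y /\ finite_codim Y /\
      finite_set H /\ H `<=` A /\
      (unit_ball X `&` Y) `<=` minkowski_sum (minkowski_diff A H) (set_scale eps (unit_ball X)).
Proof.
move=> _ A_conv A0 O_fin B_AO eps eps_gt0.
have [s O_s] := (finite_seqP O).1 O_fin; subst O.
have [Y [H [Y_sub [Y_closed [Y_codim [H_fin [HA approxY]]]]]]] :=
  approx_translates A_conv A0 eps_gt0 s.
exists Y, H; do 5 split => //.
move=> y [y_B Yy]; have [a a_A [z z_s ya]] := B_AO y y_B; subst y.
by apply: (approxY z) => //; rewrite addrK.
Qed.
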